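(* For any tuples $\vec v,\vec w$ of variables, the functional dependence atom $=\!(\vec v,\vec w)$ is definable in $\mathbf{FO}(\sim,=\!(\cdot))$; i.e. there is a formula $\theta(\vec v,\vec w)$ of $\mathbf{FO}(\sim,=\!(\cdot))$ over the empty vocabulary such that for all structures $\mathfrak M$ and teams $X$ whose domain contains $\vec v\vec w$, $\mathfrak M\models_X=\!(\vec v,\vec w)$ iff $\mathfrak M\models_X\theta$.
   Context: Team semantics (lax version). For a structure $\mathfrak M$ with domain $M$, a team $X$ is a (possibly empty) set of assignments $s:V\to M$, $V$ a finite set of variables. Satisfaction: first-order literal $\alpha$: every $s\in X$ satisfies $\alpha$ (Tarski); $\psi\vee\theta$: $X=Y\cup Z$ with $\mathfrak M\models_Y\psi$, $\mathfrak M\models_Z\theta$; $\psi\wedge\theta$: both; $\exists v\psi$: some $F:X\to\mathcal P(M)\setminus\{\emptyset\}$ with $\mathfrak M\models_{X[F/v]}\psi$, $X[F/v]=\{s[m/v]:s\in X,m\in F(s)\}$; $\forall v\psi$: $\mathfrak M\models_{X[M/v]}\psi$, $X[M/v]=\{s[m/v]:s\in X,m\in M\}$; contradictory negation $\mathfrak M\models_X\sim\phi$ iff $\mathfrak M\not\models_X\phi$. Constancy atoms (all arities): $\mathfrak M\models_X=\!(\vec u)$ iff $s(\vec u)=s'(\vec u)$ for all $s,s'\in X$. Functional dependence: $\mathfrak M\models_X=\!(\vec v,\vec w)$ iff for all $s,s'\in X$, $s(\vec v)=s'(\vec v)$ implies $s(\vec w)=s'(\vec w)$. *)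

From Stdlib Require Import List.
Import ListNotations.
Set Implicit Arguments.

Definition var := nat.

Inductive formula : Type :=
| FEq   : var -> var -> formula
| FNeq  : var -> var -> formula
| FOr   : formula -> formula -> formula
| FAnd  : formula -> formula -> formula
| FEx   : var -> formula -> formula
| FAll  : var -> formula -> formula
| FTilde : formula -> formula
| FConst : list var -> formula.

Fixpoint fv (phi : formula) : list var :=
  match phi with
  | FEq x y | FNeq x y => [x; y]
  | FOr a b | FAnd a b => fv a ++ fv b
  | FEx v a | FAll v a => filter (fun x => negb (Nat.eqb x v)) (fv a)
  | FTilde a => fv a
  | FConst u => u
  end.

Section Sem.
Variable M : Type.

(* An assignment is a partial map from variables to M (None = unassigned). *)
Definition assignment := var -> option M.
Definition team := assignment -> Prop.

Definition upd (s : assignment) (v : var) (m : M) : assignment :=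
  fun x => if Nat.eqb x v then Some m else s x.

Definition team_domain (X : team) (V : list var) : Prop :=
  forall s, X s -> forall x, (s x <> None <-> In x V).

Definition vals (s : assignment) (u : list var) : list (option M) := map s u.

Fixpoint sat (phi : formula) (X : team) : Prop :=
  match phi with
  | FEq x y => forall s, X s -> s x = s y
  | FNeq x y => forall s, X s -> s x <> s y
  | FOr a b => exists Y Z : team,
      (forall s, X s <-> (Y s \/ Z s)) /\ sat a Y /\ sat b Z
  | FAnd a b => sat a X /\ sat b X
  | FEx v a => exists F : assignment -> M -> Prop,
      (forall s, X s -> exists m, F s m) /\
      sat a (fun s' => exists s m, X s /\ F s m /\ s' = upd s v m)
  | FAll v a => sat a (fun s' => exists s m, X s /\ s' = upd s v m)
  | FTilde a => ~ sat a X
  | FConst u => forall s s', X s -> X s' -> vals s u = vals s' u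
  end.

Definition dep_sat (v w : list var) (X : team) : Prop :=
  forall s s', X s -> X s' -> vals s v = vals s' v -> vals s w = vals s' w.

End Sem.

(* The dependence atom =(v, w) fails in X exactly when some subteam of X
   (a pair of assignments suffices) has v constant but w not.  The existence of
   such a subteam is expressible in lax team semantics by a disjunction with
   the tautology =() : the tautology absorbs the rest of X.  Hence
   ~(=() \/ (=(v) /\ ~=(w))) defines =(v, w), on every team whatever its
   domain. *)
From Stdlib Require Import List Classical.

Definition dep_formula (v w : list var) : formula :=
  FTilde (FOr (FConst nil) (FAnd (FConst v) (FTilde (FConst w)))).

Lemma fv_dep_formula (v w : list var) : fv (dep_formula v w) = v ++ w.
Proof. reflexivity. Qed.

Section Subteams.
Variable M : Type.

Definition subteam (Z X : team M) : Prop := forall s, Z s -> X s.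

Lemma sat_FConst_nil (X : team M) : sat (FConst nil) X.
Proof. intros s s' _ _; reflexivity. Qed.

Lemma sat_FOr_top (phi : formula) (X : team M) :
  sat (FOr (FConst nil) phi) X <-> exists Z, subteam Z X /\ sat phi Z.
Proof.
  split.
  - intros [Y [Z [HXYZ [_ HZ]]]].
    exists Z; split; [intros s Hs; apply HXYZ; now right | exact HZ].
  - intros [Z [HZX HZ]].
    exists X, Z; split; [| split; [apply sat_FConst_nil | exact HZ]].
    intros s; split; [now left |].
    intros [Hs | Hs]; [exact Hs | now apply HZX].
Qed.

Lemma dep_sat_iff_no_violating_subteam (v w : list var) (X : team M) :
  dep_sat v w X <->
  ~ exists Z, subteam Z X /\ sat (FConst v) Z /\ ~ sat (FConst w) Z.
Proof.
  split.
  - intros Hdep [Z [HZX [Hv Hw]]].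
    apply Hw; intros s s' Hs Hs'.
    apply Hdep; auto.
  - intros Hno s s' Hs Hs' Hv.
    apply NNPP; intro Hw.
    apply Hno; exists (fun t => t = s \/ t = s'); repeat split.
    + intros t [-> | ->]; assumption.
    + intros t t' [-> | ->] [-> | ->]; auto.
    + intro Hconst; apply Hw, Hconst; auto.
Qed.

Lemma sat_dep_formula (v w : list var) (X : team M) :
  sat (dep_formula v w) X <-> dep_sat v w X.
Proof.
  rewrite dep_sat_iff_no_violating_subteam.
  exact (not_iff_compat (sat_FOr_top (FAnd (FConst v) (FTilde (FConst w))) X)).
Qed.

End Subteams.

Theorem mainTheorem15 :
  forall v w : list var,
    exists theta : formula,
      (forall x, In x (fv theta) -> In x (v ++ w)) /\
      forall (M : Type) (m0 : M) (X : team M) (V : list var),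
        team_domain X V ->
        (forall x, In x (v ++ w) -> In x V) ->
        (dep_sat v w X <-> sat theta X).
Proof.
  intros v w.
  exists (dep_formula v w); split.
  - now rewrite fv_dep_formula.
  - intros M _ X _ _ _.
    symmetry; apply sat_dep_formula.
Qed.
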